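(* Let $\Sigma$ be a set containing $0$, $(\Gamma,\oplus)$ an abelian group, and $f:\Sigma^n\to\Gamma$. If $f$ has both $K$-separable and $L$-separable arguments for partitions $K=\{K_1,\ldots,K_k\}$ and $L=\{L_1,\ldots,L_l\}$ of $[n]$, then $f$ has $(K\wedge L)$-separable arguments, where $K\wedge L=\{K_i\cap L_j: i\in[k],\,j\in[l]\}\setminus\{\emptyset\}$.
   Context: $[n]=\{1,\ldots,n\}$; for $M=\{i_1<\cdots<i_m\}\subseteq[n]$ and $\bar x=(x_1,\ldots,x_n)$, $\bar x_M=(x_{i_1},\ldots,x_{i_m})$. A function $f:\Sigma^n\to\Gamma$ has $K$-separable arguments (for a partition $K=\{K_1,\ldots,K_k\}$ of $[n]$ into nonempty sets) if there exist functions $f_j:\Sigma^{|K_j|}\to\Gamma$ with $f(\bar x)=f_1(\bar x_{K_1})\oplus\cdots\oplus f_k(\bar x_{K_k})$ for all $\bar x$. *)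

From HB Require Import structures.
From mathcomp Require Import all_boot all_order all_algebra.
Set Implicit Arguments. Unset Strict Implicit. Unset Printing Implicit Defensive.
Import GRing.Theory.
Local Open Scope ring_scope.

(* [n] is modelled by 'I_n = {0,...,n-1}; Sigma^n by n.-tuple Sigma. *)

(* x_M : the subtuple of x indexed by M, in increasing order of indices
   (enum of a set of ordinals is increasing). *)
Definition restr (Sigma : Type) (n : nat) (x : n.-tuple Sigma) (M : {set 'I_n})
  : #|M|.-tuple Sigma :=
  [tuple tnth x (@enum_val _ (mem M) i) | i < #|M|].

Definition separable_args (Sigma : Type) (Gamma : zmodType) (n : nat)
  (f : n.-tuple Sigma -> Gamma) (K : {set {set 'I_n}}) : Prop :=
  exists g : forall B : {set 'I_n}, #|B|.-tuple Sigma -> Gamma,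
    forall x : n.-tuple Sigma, f x = \sum_(B in K) g B (restr x B).

Definition meet_part (n : nat) (K L : {set {set 'I_n}}) : {set {set 'I_n}} :=
  [set A :&: B | A in K, B in L] :\ set0.

From mathcomp Require Import all_boot all_order all_algebra.
Set Implicit Arguments. Unset Strict Implicit. Unset Printing Implicit Defensive.
Import GRing.Theory.
Local Open Scope ring_scope.

(* Write x|_S for x with the coordinates outside S replaced by 0.  If f is
   K-separable, with K pairwise disjoint, then f x|_A - f 0 only sees the
   block A, so f x - f 0 = sum_(A in K) (f x|_A - f 0).  Expanding each term
   once more along L gives f x - f 0 = sum_(C in K /\ L) (f x|_C - f 0), and
   the summand for C depends on x_C only; the constant f 0 is absorbed by any
   one block. *)

Section Padding.
Variables (Sigma : Type) (zero : Sigma) (n : nat).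

Definition zeros : n.-tuple Sigma := [tuple zero | _ < n].

Definition pad (S : {set 'I_n}) (x : n.-tuple Sigma) : n.-tuple Sigma :=
  [tuple if i \in S then tnth x i else zero | i < n].

Definition unrestr (C : {set 'I_n}) (y : #|C|.-tuple Sigma) : n.-tuple Sigma :=
  [tuple if i \in C then nth zero y (index i (enum C)) else zero | i < n].

Lemma pad0 x : pad set0 x = zeros.
Proof. by apply: eq_from_tnth => i; rewrite !tnth_mktuple inE. Qed.

Lemma pad_pad A B x : pad B (pad A x) = pad (A :&: B) x.
Proof.
apply: eq_from_tnth => i; rewrite !tnth_mktuple inE.
by case: (i \in B); case: (i \in A).
Qed.

Lemma restr_pad S T x : restr (pad T x) S = restr (pad (S :&: T) x) S.
Proof.
apply: eq_from_tnth => j; rewrite !tnth_mktuple inE.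
by have := enum_valP j; rewrite /= => ->.
Qed.

Lemma restr_padT S x : restr (pad S x) S = restr x S.
Proof.
apply: eq_from_tnth => j; rewrite !tnth_mktuple.
by have := enum_valP j; rewrite /= => ->.
Qed.

Lemma unrestr_restr C x : unrestr (restr x C) = pad C x.
Proof.
apply: eq_from_tnth => i; rewrite !tnth_mktuple.
case iC: (i \in C) => //.
set j := enum_rank_in iC i.
have ji : enum_val j = i by rewrite enum_rankK_in.
have -> : index i (enum C) = j.
  by rewrite -{1}ji (enum_val_nth i) index_uniq ?enum_uniq // -cardE.
by rewrite -(tnth_nth zero (restr x C) j) tnth_mktuple ji.
Qed.

End Padding.

Section Increments.
Variables (Sigma : Type) (zero : Sigma) (Gamma : zmodType) (n : nat).
Variable f : n.-tuple Sigma -> Gamma.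

Local Notation pad := (pad zero).
Local Notation zeros := (zeros zero n).

Lemma separable_args_increments (K : {set {set 'I_n}}) :
  trivIset K -> separable_args f K ->
  forall x, f x - f zeros = \sum_(A in K) (f (pad A x) - f zeros).
Proof.
move=> /trivIsetP tK [g fE] x.
rewrite -(pad0 zero x) [in LHS]fE [in LHS]fE -sumrB.
apply: eq_bigr => A AK; rewrite fE fE -sumrB (bigD1 A) //= restr_padT.
rewrite big1 ?addr0 // => B /andP [BK BA].
by rewrite restr_pad (disjoint_setI0 (tK _ _ BK AK BA)) subrr.
Qed.

Lemma separable_args_of_increments (M : {set {set 'I_n}}) C0 :
  C0 \in M ->
  (forall x, f x - f zeros = \sum_(C in M) (f (pad C x) - f zeros)) ->
  separable_args f M.
Proof.
move=> C0M fE.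
exists (fun C y => f (unrestr zero y) - f zeros + (if C == C0 then f zeros else 0)).
have sum_C0 : \sum_(C in M) (if C == C0 then f zeros else 0) = f zeros.
  by rewrite -big_mkcondr (big_pred1 C0) // => C /=; case: eqP => [->|]; rewrite ?andbT ?andbF.
move=> x; rewrite big_split /= sum_C0.
under eq_bigr do rewrite unrestr_restr.
by rewrite -fE subrK.
Qed.

Lemma separable_args_set0 (M : {set {set 'I_n}}) :
  separable_args f set0 -> separable_args f M.
Proof.
case=> g fE; exists (fun _ _ => 0) => x.
by rewrite fE big_set0 big1.
Qed.

End Increments.

Section MeetPartition.
Variables (n : nat) (K L : {set {set 'I_n}}).

Local Notation meets := [set p in setX K L | p.1 :&: p.2 != set0].

Lemma meet_partE : meet_part K L = (fun p => p.1 :&: p.2) @: meets.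
Proof.
apply/setP => C; rewrite !inE; apply/andP/imsetP.
  by case=> C0 /imset2P [A B AK BL C_AB]; exists (A, B); rewrite // !inE AK BL -C_AB.
case=> -[A B]; rewrite !inE /= => /andP [/andP [AK BL] AB0] ->.
by split; last exact: imset2_f.
Qed.

Lemma setI_blocks_inj :
  trivIset K -> trivIset L -> {in meets &, injective (fun p => p.1 :&: p.2)}.
Proof.
move=> tK tL [A B] [A' B']; rewrite !inE /= => /andP [/andP [AK BL] /set0Pn [i]].
rewrite inE => /andP [iA iB] /andP [/andP [AK' BL'] _] AB_eq.
have /setIP [iA' iB'] : i \in A' :&: B' by rewrite -AB_eq inE iA iB.
rewrite -(def_pblock tK AK iA) -(def_pblock tL BL iB).
by rewrite (def_pblock tK AK' iA') (def_pblock tL BL' iB').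
Qed.

Lemma sum_meet_part (Gamma : zmodType) (F : {set 'I_n} -> Gamma) :
  trivIset K -> trivIset L -> F set0 = 0 ->
  \sum_(A in K) \sum_(B in L) F (A :&: B) = \sum_(C in meet_part K L) F C.
Proof.
move=> tK tL F0; rewrite meet_partE big_imset /=; last exact: setI_blocks_inj.
rewrite pair_big_dep (bigID (fun p => p.1 :&: p.2 != set0)) /=.
rewrite [X in _ + X]big1 ?addr0 => [|p /andP [_]]; last by rewrite negbK => /eqP ->.
by apply: eq_bigl => p; rewrite !inE.
Qed.

Lemma meet_part_neq0 (D : {set 'I_n}) :
  partition K D -> partition L D -> K != set0 -> meet_part K L != set0.
Proof.
case/and3P=> /eqP covK _ K0 /and3P [/eqP covL _ _] /set0Pn [A AK].
have /set0Pn [i iA] : A != set0 by apply: contraNneq K0 => <-.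
have iL : i \in cover L by rewrite covL -covK; apply/bigcupP; exists A.
apply/set0Pn; exists (A :&: pblock L i); rewrite !inE; apply/andP; split.
  by apply/set0Pn; exists i; rewrite inE iA mem_pblock.
by apply: imset2_f => //; apply: pblock_mem.
Qed.

End MeetPartition.

Theorem lemmaA3 (Sigma : Type) (zero : Sigma) (Gamma : zmodType) (n : nat)
  (f : n.-tuple Sigma -> Gamma) (K L : {set {set 'I_n}}) :
  partition K [set: 'I_n] -> partition L [set: 'I_n] ->
  separable_args f K -> separable_args f L ->
  separable_args f (meet_part K L).
Proof.
move=> pK pL sK sL.
have [K0 | K_neq0] := eqVneq K set0; first by apply: separable_args_set0; rewrite -K0.
have /set0Pn [C0 C0M] := meet_part_neq0 pK pL K_neq0.
have tK : trivIset K by case/and3P: pK.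
have tL : trivIset L by case/and3P: pL.
apply: (separable_args_of_increments (zero := zero) C0M) => x.
rewrite (separable_args_increments zero tK sK).
set incr := fun C => f (pad zero C x) - f (zeros zero n).
rewrite -(sum_meet_part (F := incr) tK tL); last by rewrite /incr pad0 subrr.
apply: eq_bigr => A AK.
rewrite (separable_args_increments zero tL sL).
by apply: eq_bigr => B BL; rewrite pad_pad.
Qed.
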